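(* Let $n\ge 3$ and let $T=(l_1,\dots,l_n)$, $l_1\le\cdots\le l_n$, be an impossibly burnable $n$-path forest of order $m^2$. If $B_m(l_i)\le 2$ for some $i$, then $l_1\le 12n-2\sqrt{30n-27}-8$. In particular, if $l_1=M_n$ then $B_m(l_i)\ge 3$ for every $i\in[n]$.
   Context: A path forest is a disjoint union of paths; an $n$-path forest is represented by the tuple $(l_1,\dots,l_n)$ of its path orders, with total order $\sum_i l_i=m^2$. For $m\in\mathbb{N}$ and an integer $1\le l\le m^2$, let $B_m(l)$ be the least positive integer $t$ with $t\equiv l\pmod 2$ such that $l\le 2mt-t^2$. An $n$-path forest of order $m^2$ is impossibly burnable if $\sum_{i=1}^n B_m(l_i)>m$. For $n\ge2$, $M_n$ denotes the maximum of $l_1$ over all impossibly burnable $n$-path forests. *)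

From Stdlib Require Import Reals.
From mathcomp Require Import all_boot.

(* Admissible burning values: t positive, t = l (mod 2), l <= 2mt - t^2
   (the last stated without truncated subtraction as l + t^2 <= 2mt). *)
Definition burn_ok (m l t : nat) : bool :=
  [&& 0 < t, odd t == odd l & l + t ^ 2 <= 2 * m * t].

(* For 1 <= l <= m^2 such a t
   exists and is <= m+1, so searching t in [0, 2m+2) finds the least one;
   find returns the index, which equals t since the list is iota 0 _. *)
Definition Bm (m l : nat) : nat := find (burn_ok m l) (iota 0 (2 * m + 2)).

(* An n-path forest of order m^2, represented by the sorted list
   (l_1 <= ... <= l_n) of its (positive) path orders. *)
Definition path_forest (n m : nat) (l : seq nat) : Prop :=
  [/\ size l = n, sorted leq l, all (fun x => 0 < x) l & sumn l = m ^ 2].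

Definition impossibly_burnable (n m : nat) (l : seq nat) : Prop :=
  path_forest n m l /\ m < sumn (map (Bm m) l).

Definition is_Mn (n x : nat) : Prop :=
  (exists m l, impossibly_burnable n m l /\ head 0%N l = x) /\
  (forall m l, impossibly_burnable n m l -> head 0%N l <= x).

Section Bound.
Local Open Scope R_scope.
Definition l1_bound (n x : nat) : Prop :=
  INR x <= 12 * INR n - 2 * sqrt (30 * INR n - 27) - 8.
End Bound.

(* Split the forest into the Q paths with B_m <= 3 and the p = n - Q paths
   with B_m >= 4.  Minimality of B_m forces a path with B_m = 4 + e to have
   order at least 4m - 2 + e(2m - 4 - e), and parity turns sum B_m > m into
   sum B_m >= m + 2, while the path with B_m <= 2 makes the short paths
   contribute at most 3Q - 1.  Adding up orders (each short path has order
   >= l_1) and burning numbers gives Q l_1 <= 12nQ - 8Q - 3Q^2 - 10n + 9, and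
   AM-GM in Q turns this into l_1 <= 12n - 2 sqrt(30n - 27) - 8.
   For the second claim, a forest made of a = floor(sqrt(2n)) odd paths of
   nearly equal order and n - a paths of order 4m - 2 is impossibly burnable
   and its shortest path beats that bound, so M_n does too. *)

From Stdlib Require Import Reals ZArith Lia Lra Psatz.
From mathcomp Require Import all_boot zify.

Set Implicit Arguments.
Unset Strict Implicit.
Unset Printing Implicit Defensive.

Lemma Bm_min m l t : t < Bm m l -> ~~ burn_ok m l t.
Proof.
move=> lt_t; have := before_find 0 lt_t.
have : Bm m l <= 2 * m + 2 by rewrite -[X in _ <= X](size_iota 0) find_size.
by move=> ?; rewrite nth_iota ?add0n => [->|]; last lia.
Qed.

Lemma burn_ok_odd_ge3 m l t : odd l -> 2 * m <= l -> burn_ok m l t -> 3 <= t.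
Proof. by move=> odd_l le_l /and3P[]; case: t => [|[|[|t]]] //= _ /eqP; lia. Qed.

Lemma burn_ok_4m_sub2_ge4 m t : burn_ok m (4 * m - 2) t -> 4 <= t.
Proof. by case/and3P; case: t => [|[|[|[|t]]]] //= _ /eqP; lia. Qed.

Section BurningNumber.

Variables m l : nat.
Hypothesis l_range : 0 < l <= m ^ 2.

Lemma burn_ok_exists : exists2 t, t <= m.+1 & burn_ok m l t.
Proof.
case/andP: l_range => l_gt0 l_le.
have [par|par] := eqVneq (odd m) (odd l).
  exists m => //; apply/and3P; split; [lia | exact/eqP | nia].
have l_lt : l < m ^ 2.
  by rewrite ltn_neqAle l_le andbT; apply: contra_neq par => ->; rewrite oddX.
exists m.+1 => //; apply/and3P; split => //; last nia.
by move: par; rewrite /=; case: (odd m); case: (odd l).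
Qed.

Lemma BmP : burn_ok m l (Bm m l) /\ Bm m l <= m.+1.
Proof.
have [t le_t ok_t] := burn_ok_exists.
have m_gt0 : 0 < m by case/andP: l_range => ? ?; nia.
have le_Bm : Bm m l <= t.
  by rewrite leqNgt; apply/negP=> /Bm_min; rewrite ok_t.
split; last exact: leq_trans le_Bm le_t.
have has_ok : has (burn_ok m l) (iota 0 (2 * m + 2)).
  by apply/hasP; exists t => //; rewrite mem_iota; lia.
have := nth_find 0 has_ok; rewrite nth_iota //.
by move: has_ok; rewrite has_find size_iota.
Qed.

Lemma odd_Bm : odd (Bm m l) = odd l.
Proof. by case: BmP => /and3P[_ /eqP]. Qed.

Lemma Bm_length_lower : 4 <= Bm m l ->
  4 * m - 2 + (Bm m l - 4) * (2 * m - Bm m l) <= l.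
Proof.
move=> ge4; have [_ leB] := BmP; have par := odd_Bm.
(* t = Bm - 2 is not admissible; as l + t^2 and 2mt are even, l + t^2 >= 2mt + 2. *)
have /Bm_min : Bm m l - 2 < Bm m l by lia.
rewrite /burn_ok; set t := Bm m l - 2.
have -> : 0 < t by lia.
have par_t : odd t = odd l by rewrite -par /t; lia.
rewrite par_t eqxx /= -ltnNge => lt_t.
have even : ~~ odd (l + t ^ 2) by rewrite oddD oddX par_t addbb.
have {lt_t even} fits : 2 * m * t + 2 <= l + t ^ 2.
  by move: lt_t even; rewrite -mulnA; move: (t ^ 2) (m * t) => u v; lia.
move: ge4 leB fits; rewrite /t; move: (Bm m l) => B; clear.
move=> /subnK <-; move: (B - 4) => k.
by rewrite addnS ltnS => /subnK <-; move: (m - _) => j; nia.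
Qed.

End BurningNumber.

Lemma sum_mul_subn_le (I : Type) (r : seq I) (P : pred I) (F : I -> nat) K :
  (\sum_(i <- r | P i) F i) * (K - \sum_(i <- r | P i) F i) <=
  \sum_(i <- r | P i) F i * (K - F i).
Proof.
elim: r => [|i r IH]; rewrite ?big_nil // !big_cons; case: ifP => // _.
move: IH; move: (\sum_(j <- r | P j) F j * (K - F j)) => t.
move: (F i) (\sum_(j <- r | P j) F j) => a s IH.
have [lt_K|le_K] := ltnP K (a + s).
  by rewrite (_ : K - _ = 0) ?muln0 //; apply/eqP; rewrite subn_eq0 ltnW.
have -> : K - a = K - (a + s) + s by lia.
have Ks : K - s = K - (a + s) + a by lia.
rewrite Ks in IH; move: (K - (a + s)) IH => d IH; nia.
Qed.

Lemma odd_sum_eq (I : eqType) (r : seq I) (F G : I -> nat) :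
  {in r, forall i, odd (F i) = odd (G i)} ->
  odd (\sum_(i <- r) F i) = odd (\sum_(i <- r) G i).
Proof.
move=> FG; rewrite big_seq [in RHS]big_seq.
by elim/big_rec2: _ => // i a b /FG; rewrite !oddD => -> ->.
Qed.

Lemma ltn_sum_seq (I : eqType) (r : seq I) (P : pred I) (F G : I -> nat) x :
  x \in r -> P x -> F x < G x -> {in r, forall i, P i -> F i <= G i} ->
  \sum_(i <- r | P i) F i < \sum_(i <- r | P i) G i.
Proof.
move=> xr Px ltx le.
rewrite (big_rem _ xr) [X in _ < X](big_rem _ xr) Px /= -addSn leq_add //.
rewrite big_seq_cond [X in _ <= X]big_seq_cond.
by apply: leq_sum => i /andP[/mem_rem ir Pi]; exact: le.
Qed.

Section CountingInequality.
Local Open Scope Z_scope.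

Lemma small_paths_ineq (Q p m x E C : Z) :
  1 <= Q -> 0 <= p -> 1 <= m -> 0 <= E <= m * p -> m + 3 <= 3 * Q + 4 * p + E ->
  Q * x + p * (4 * m - 2) + C <= m ^ 2 ->
  E * (m - 1) <= C -> E * (2 * m - 4 - E) <= C ->
  Q * x <= 12 * (Q + p) * Q - 8 * Q - 3 * Q ^ 2 - 10 * (Q + p) + 9.
Proof.
move=> Q_ge1 p_ge0 m_ge1 [E_ge0 E_le] burn len lin quad.
(* The bound is the value of m^2 - p(4m - 2) at the largest m allowed when E = 0. *)
set M := 3 * Q + 4 * p - 3.
have -> : 12 * (Q + p) * Q - 8 * Q - 3 * Q ^ 2 - 10 * (Q + p) + 9 = M ^ 2 - p * (4 * M - 2).
  by rewrite /M; ring.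
set D := m - M.
have shift : m ^ 2 - p * (4 * m - 2) =
    M ^ 2 - p * (4 * M - 2) + D * (2 * m - 4 - D) - D * (4 * p - 4).
  by rewrite /D; ring.
have C_ge0 : 0 <= C by apply: Z.le_trans lin; apply: Z.mul_nonneg_nonneg; lia.
have [le_mM|lt_Mm] := Z_le_gt_dec m M.
  have : 0 <= (M - m) * (M + m - 4 * p) by apply: Z.mul_nonneg_nonneg; rewrite /M; lia.
  have : D * (2 * m - 4 - D) - D * (4 * p - 4) = - ((M - m) * (M + m - 4 * p)).
    by rewrite /D; ring.
  lia.
have p_ge1 : 1 <= p.
  case: (Z_le_gt_dec p 0) => [p_le0|]; last lia.
  have : m * p <= 0 by apply: Z.mul_nonneg_nonpos; lia.
  rewrite /D /M in lt_Mm; lia.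
have D_le : D <= E by rewrite /D /M; lia.
have D_quad : D * (2 * m - 4 - D) <= C.
  case: (Z_le_gt_dec E (m - 2)) => [E_le_m|E_gt_m].
    have : E * (2 * m - 4 - E) - D * (2 * m - 4 - D) = (E - D) * (2 * m - 4 - E - D).
      by ring.
    have : 0 <= (E - D) * (2 * m - 4 - E - D).
      by apply: Z.mul_nonneg_nonneg; rewrite /D /M in lt_Mm *; lia.
    lia.
  have : (m - 1) * (m - 1) <= E * (m - 1) by apply: Z.mul_le_mono_nonneg_r; lia.
  have : 0 <= (m - 2 - D) * (m - 2 - D) by apply: Z.square_nonneg.
  have : (m - 1) * (m - 1) - D * (2 * m - 4 - D) = (m - 2 - D) * (m - 2 - D) + 2 * m - 3.
    by ring.
  rewrite /D /M in lt_Mm *; lia.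
have : 0 <= D * (4 * p - 4) by apply: Z.mul_nonneg_nonneg; rewrite /D in lt_Mm; lia.
lia.
Qed.

End CountingInequality.

(* For x >= 0, [l1_bound n x] says that Y = 12n - 8 - x is at least
   2 sqrt(30n - 27), i.e. Y >= 0 and Y^2 >= 120n - 108. *)
Definition l1_boundZ (n x : Z) : Prop :=
  (0 <= 12 * n - 8 - x /\ 120 * n - 108 <= (12 * n - 8 - x) ^ 2)%Z.

Section L1Bound.
Local Open Scope Z_scope.

Lemma l1_boundZ_count (n x Q : Z) : 1 <= n -> 1 <= Q ->
  Q * x <= 12 * n * Q - 8 * Q - 3 * Q ^ 2 - 10 * n + 9 -> l1_boundZ n x.
Proof.
move=> n_ge1 Q_ge1 le_x; rewrite /l1_boundZ; set Y := 12 * n - 8 - x.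
set A := 3 * Q ^ 2 + 10 * n - 9.
have A_gt0 : 0 < A by rewrite /A; nia.
have QY : A <= Q * Y by rewrite /A /Y; lia.
have Y_ge0 : 0 <= Y by apply/(Z.mul_nonneg_cancel_l Q); lia.
split => //.
have sq : A * A <= (Q * Y) * (Q * Y) by apply: Z.mul_le_mono_nonneg; lia.
have amgm : A * A = (3 * Q ^ 2 - (10 * n - 9)) ^ 2 + Q ^ 2 * (120 * n - 108).
  by rewrite /A; ring.
have : Q ^ 2 * (120 * n - 108) <= Q ^ 2 * Y ^ 2.
  have : 0 <= (3 * Q ^ 2 - (10 * n - 9)) ^ 2 by apply: Z.pow_even_nonneg; exists 1.
  have : (Q * Y) * (Q * Y) = Q ^ 2 * Y ^ 2 by ring.
  lia.
have Q2_gt0 : 0 < Q ^ 2 by lia.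
by move=> ?; apply/(Z.mul_le_mono_pos_l _ _ _ Q2_gt0).
Qed.

Lemma l1_boundZ_le (n x y : Z) : x <= y -> l1_boundZ n y -> l1_boundZ n x.
Proof.
move=> le_xy [Y_ge0 Y_sq]; split; first lia.
apply: (Z.le_trans _ _ _ Y_sq); apply: Z.pow_le_mono_l; lia.
Qed.

End L1Bound.

Section RealBound.
Local Open Scope R_scope.

Lemma l1_bound_of_Z (n x : nat) : l1_boundZ (Z.of_nat n) (Z.of_nat x) -> l1_bound n x.
Proof.
case=> Y_ge0 Y_sq.
have /le_INR n_ge1 : (1 <= n)%coq_nat by apply/leP; lia.
move/IZR_le: Y_ge0; move/IZR_le: Y_sq; rewrite /l1_bound.
rewrite !(minus_IZR, mult_IZR, pow_IZR) -!INR_IZR_INZ /= => Y_sq Y_ge0.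
have s_ge0 := sqrt_pos (30 * INR n - 27).
have ss : sqrt (30 * INR n - 27) * sqrt (30 * INR n - 27) = 30 * INR n - 27.
  by apply: sqrt_sqrt; rewrite /= in n_ge1; lra.
nra.
Qed.

End RealBound.

Section SmallPaths.

Variables (n m : nat) (l : seq nat).
Hypothesis forest : path_forest n m l.

(* A path of B_m = 4 + e has order at least 4m - 2 + e(2m - 4 - e): E and C
   add up the e and the e(2m - 4 - e) over the long paths. *)
Let small y := Bm m y <= 3.
Let Q := count small l.
Let p := count (predC small) l.
Let E := \sum_(y <- l | ~~ small y) (Bm m y - 4).
Let C := \sum_(y <- l | ~~ small y) (Bm m y - 4) * (2 * m - Bm m y).

Lemma path_forest_range y : y \in l -> 0 < y <= m ^ 2.
Proof.
case: forest => _ _ /allP pos_l <- yl; rewrite pos_l //= sumnE (big_rem _ yl) /=.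
exact: leq_addr.
Qed.

Lemma path_forest_head_le y : y \in l -> head 0 l <= y.
Proof.
case: forest => _ + _ _; case: l => [|a s] //= sorted_s.
by rewrite inE => /predU1P[-> //|ys]; apply: (allP (order_path_min leq_trans sorted_s)).
Qed.

Lemma path_forest_Bm_le y : y \in l -> Bm m y <= m.+1.
Proof. by move/path_forest_range/BmP=> []. Qed.

Lemma count_small_big : Q + p = n.
Proof. by case: forest => size_l _ _ _; rewrite count_predC. Qed.

Lemma lengths_count : Q * head 0 l + p * (4 * m - 2) + C <= m ^ 2.
Proof.
case: forest => _ _ _ <-.
rewrite /Q /p /C sumnE [X in _ <= X](bigID small) /= -addnA leq_add //.
  rewrite -sum1_count big_distrl big_seq_cond [X in _ <= X]big_seq_cond.
  by apply: leq_sum => y /andP[yl _]; rewrite /= mul1n path_forest_head_le.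
rewrite -sum1_count big_distrl -big_split big_seq_cond [X in _ <= X]big_seq_cond /=.
apply: leq_sum => y /andP[yl big_y]; rewrite mul1n.
by apply: Bm_length_lower; [exact: path_forest_range | rewrite ltnNge].
Qed.

Lemma sum_big_Bm : \sum_(y <- l | ~~ small y) Bm m y = 4 * p + E.
Proof.
rewrite /p /E -sum1_count big_distrr -big_split /=.
by apply: eq_bigr => y; rewrite -ltnNge muln1 => /subnKC.
Qed.

Lemma burning_count : (exists2 y, y \in l & Bm m y <= 2) ->
  m < sumn (map (Bm m) l) -> m + 3 <= 3 * Q + 4 * p + E.
Proof.
case=> y0 y0l y0_le2; rewrite sumnE big_map => gt_m.
have par : odd (\sum_(y <- l) Bm m y) = odd m.
  rewrite (odd_sum_eq (G := id)) => [|y /path_forest_range/odd_Bm //].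
  by case: forest => _ _ _; rewrite -sumnE => ->; rewrite oddX.
have small_lt : \sum_(y <- l | small y) Bm m y < 3 * Q.
  rewrite /Q -iter_addn_0 -big_const_seq.
  apply: (ltn_sum_seq (G := fun=> 3) y0l) => //.
  by apply: leq_trans y0_le2 _.
move: gt_m par small_lt; rewrite (bigID small) /= sum_big_Bm.
by move: (\sum_(y <- l | small y) _) => S; lia.
Qed.

Lemma excess_le : E <= m * p.
Proof.
rewrite /E /p -sum1_count big_distrr big_seq_cond [X in _ <= X]big_seq_cond.
by apply: leq_sum => y /andP[/path_forest_Bm_le le_y _] /=; lia.
Qed.

Lemma excess_linear : E * (m - 1) <= C.
Proof.
rewrite /E /C big_distrl big_seq_cond [X in _ <= X]big_seq_cond.
by apply: leq_sum => y /andP[/path_forest_Bm_le le_y _] /=; apply: leq_mul; lia.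
Qed.

Lemma excess_quadratic :
  (Z.of_nat E * (2 * Z.of_nat m - 4 - Z.of_nat E) <= Z.of_nat C)%Z.
Proof.
have : E * (2 * m - 4 - E) <= C.
  rewrite /E /C; apply: (leq_trans (sum_mul_subn_le _ _ _ _)).
  by apply/eq_leq/eq_bigr => y; rewrite /small -ltnNge => ge4; congr (_ * _); lia.
move: E C => e c; have [le_e|lt_e] := leqP e (2 * m - 4) => quad.
  have [-> | e_gt0] := posnP e; first lia.
  rewrite (_ : (2 * Z.of_nat m - 4 - Z.of_nat e = Z.of_nat (2 * m - 4 - e))%Z); last lia.
  by rewrite -Nat2Z.inj_mul; apply/inj_le/leP.
have : (0 <= Z.of_nat e * (Z.of_nat e + 4 - 2 * Z.of_nat m))%Z.
  by apply: Z.mul_nonneg_nonneg; lia.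
lia.
Qed.

Lemma small_paths_count_bound : (exists2 y, y \in l & Bm m y <= 2) ->
  m < sumn (map (Bm m) l) ->
  exists2 Q : nat, 0 < Q &
    (Z.of_nat Q * Z.of_nat (head 0%N l) <= 12 * Z.of_nat n * Z.of_nat Q - 8 * Z.of_nat Q
       - 3 * Z.of_nat Q ^ 2 - 10 * Z.of_nat n + 9)%Z.
Proof.
move=> small2 gt_m; have [y0 y0l y0_le2] := small2.
have m_gt0 : 0 < m by case/andP: (path_forest_range y0l) => ? ?; nia.
have Q_gt0 : 0 < Q by rewrite -has_count; apply/hasP; exists y0 => //; rewrite /small; lia.
exists Q => //.
have := excess_quadratic; have := excess_linear; have := excess_le.
have := burning_count small2 gt_m; have := lengths_count.
rewrite -count_small_big Nat2Z.inj_add => len burn E_le lin quad.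
apply: (small_paths_ineq (E := Z.of_nat E) (C := Z.of_nat C) (m := Z.of_nat m)).
all: nia.
Qed.

End SmallPaths.

Section Witness.

Variables a b : nat.
Hypotheses (a_ge2 : 1 < a) (b_gt0 : 0 < b).

(* a - 1 paths of order y and one of order z, all odd and of total order
   2W + a = m^2 - b(4m - 2), then b paths of order 4m - 2; the sum of their
   burning numbers is at least 3a + 4b = m + 2. *)
Let m := 3 * a + 4 * b - 2.
Let F := 4 * m - 2.
Let W := (m ^ 2 - b * F - a) %/ 2.
Let y := (W %/ a).*2.+1.
Let z := y + (W %% a).*2.

Definition witness_forest := nseq a.-1 y ++ z :: nseq b F.

Lemma witness_shape :
  exists k, [/\ a = k + 2, m = 3 * k + 4 * b + 4 & F = 12 * k + 16 * b + 14].
Proof. by exists (a - 2); rewrite /F /m; split; lia. Qed.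

Lemma witness_W : 2 * W + b * F + a = m ^ 2.
Proof.
have [k [ak mk Fk]] := witness_shape.
have R_eq : m ^ 2 - b * F - a = k * (9 * k + 23) + 2 * (6 * k * b + 9 * b + 7).
  by rewrite mk Fk ak; clear; nia.
have even : ~~ odd (m ^ 2 - b * F - a) by rewrite R_eq oddD !oddM; lia.
have le_F : b * F + a <= m ^ 2 by rewrite mk Fk ak; clear; nia.
by rewrite /W mulnC divnK ?dvdn2 //; lia.
Qed.

Lemma witness_divW : W = W %/ a * a + W %% a /\ W %% a < a.
Proof. by rewrite -divn_eq ltn_pmod //; lia. Qed.

Lemma witness_y_ge : 2 * m <= y.
Proof.
suff : m <= W %/ a by rewrite /y; lia.
rewrite leq_divRL; last lia.
have := witness_W; have [k [ak mk Fk]] := witness_shape.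
by rewrite Fk mk ak; move: W b_gt0 => w; clear; nia.
Qed.

Lemma witness_z_le : z <= F.
Proof.
rewrite -(leq_pmul2l (_ : 0 < a)); last lia.
have := witness_W; have [eW lt_r] := witness_divW.
have -> : a * z = 2 * W + 2 * (W %% a) * (a - 1) + a by rewrite {1}eW /z /y; lia.
move: (W %% a) lt_r => r lt_r; have [k [ak mk Fk]] := witness_shape.
rewrite Fk mk ak (_ : k + 2 - 1 = k + 1) in lt_r *; last lia.
have : r * (k + 1) <= (k + 1) * (k + 1) by apply: leq_mul; lia.
by move: W => w; clear -lt_r; nia.
Qed.

Lemma witness_head : head 0 witness_forest = y.
Proof. by rewrite /witness_forest; case: a a_ge2 => [|[|]]. Qed.

Lemma witness_head_bound :
  a * (12 * (a + b)) <= a * head 0 witness_forest + 3 * a ^ 2 + 14 * a + 6 * b - 6.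
Proof.
rewrite witness_head; have := witness_W; have [eW lt_r] := witness_divW.
have -> : a * y = 2 * (W %/ a * a) + a by rewrite /y; lia.
move: (W %/ a * a) (W %% a) eW lt_r => q r eW lt_r.
have [k [ak mk Fk]] := witness_shape; rewrite Fk mk ak in lt_r *.
by move: W eW => w ->; clear -lt_r; nia.
Qed.

Lemma witness_path_forest : path_forest (a + b) m witness_forest.
Proof.
have y_le_z : y <= z by rewrite /z leq_addr.
have z_le_F := witness_z_le.
have path_nseq x k c : x <= c -> path leq x (nseq k c).
  by elim: k x => //= k IH x le_xc; rewrite le_xc IH.
split.
- by rewrite size_cat /= !size_nseq; lia.
- rewrite /witness_forest (_ : a.-1 = (a - 2).+1) /=; last lia.
  rewrite cat_path path_nseq //= path_nseq // andbT.
  by elim: (a - 2) => // k IH; rewrite /= IH.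
- rewrite all_cat /= !all_nseq; lia.
- have := witness_W; have [eW _] := witness_divW.
  rewrite sumn_cat /= !sumn_nseq /z /y; lia.
Qed.

Lemma witness_impossibly_burnable : impossibly_burnable (a + b) m witness_forest.
Proof.
have forest := witness_path_forest; split => //.
have Bm_ok t : t \in witness_forest -> burn_ok m t (Bm m t).
  by move/(path_forest_range forest)/BmP => [].
have y_in : y \in witness_forest.
  by rewrite mem_cat mem_nseq eqxx andbT; apply/orP; left; lia.
have z_in : z \in witness_forest by rewrite mem_cat inE eqxx orbT.
have F_in : F \in witness_forest by rewrite mem_cat inE !mem_nseq b_gt0 eqxx !orbT.
have y_ge := witness_y_ge.
have odd_y : odd y by rewrite /y /= odd_double.
have odd_z : odd z by rewrite /z oddD odd_double odd_y.
have By := burn_ok_odd_ge3 odd_y y_ge (Bm_ok _ y_in).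
have Bz := burn_ok_odd_ge3 odd_z (leq_trans y_ge (leq_addr _ _)) (Bm_ok _ z_in).
have BF := burn_ok_4m_sub2_ge4 (Bm_ok _ F_in).
rewrite /witness_forest map_cat /= !map_nseq sumn_cat /= !sumn_nseq.
have : 3 * a.-1 <= Bm m y * a.-1 by rewrite leq_mul2r By orbT.
have : 4 * b <= Bm m F * b by rewrite leq_mul2r BF orbT.
have : m + 2 = 3 * a + 4 * b by rewrite /m; lia.
lia.
Qed.

End Witness.

Lemma impossibly_burnable_l1_boundZ n m l : impossibly_burnable n m l ->
  (exists2 i, i < n & Bm m (nth 0 l i) <= 2) ->
  l1_boundZ (Z.of_nat n) (Z.of_nat (head 0 l)).
Proof.
case=> forest gt_m [i lt_i le2].
have small2 : exists2 y, y \in l & Bm m y <= 2.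
  by exists (nth 0 l i) => //; rewrite mem_nth //; case: forest => ->.
have [Q Q_gt0 ineq] := small_paths_count_bound forest small2 gt_m.
by apply: (l1_boundZ_count (Q := Z.of_nat Q)) ineq; lia.
Qed.

Section WitnessBound.
Local Open Scope Z_scope.

Lemma witness_sqrt_ineq (a b : Z) : 2 <= a -> a ^ 2 <= 2 * (a + b) <= a ^ 2 + 2 * a ->
  (3 * a ^ 2 + 6 * a + 6 * b - 6) ^ 2 < a ^ 2 * (120 * (a + b) - 108).
Proof.
move=> a_ge2 [lo hi]; set t := 2 * b - a ^ 2 + 2 * a.
have -> : 3 * a ^ 2 + 6 * a + 6 * b - 6 = 6 * a ^ 2 - 6 + 3 * t by rewrite /t; ring.
have -> : a ^ 2 * (120 * (a + b) - 108) = 60 * a ^ 4 - 108 * a ^ 2 + 60 * a ^ 2 * t.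
  by rewrite /t; ring.
have t_range : 0 <= t <= 2 * a by rewrite /t; lia.
have : 9 * t ^ 2 <= 18 * a * t by nia.
have : 18 * a * t <= 24 * a ^ 2 * t by nia.
have : 0 < 24 * a ^ 4 - 36 * a ^ 2 - 36 by nia.
nia.
Qed.

End WitnessBound.

Lemma exists_impossibly_burnable_above n : 3 <= n ->
  exists m l, impossibly_burnable n m l /\ ~ l1_boundZ (Z.of_nat n) (Z.of_nat (head 0 l)).
Proof.
(* The shortest path has order about 12n - 3a - 6n/a, best for a close to sqrt(2n). *)
move=> n_ge3; set a := Nat.sqrt (2 * n).
have [/leP sq_le /leP sq_lt] := Nat.sqrt_spec (2 * n) (Nat.le_0_l _).
have a_ge2 : 1 < a by rewrite -/a in sq_le sq_lt; nia.
have b_gt0 : 0 < n - a by rewrite -/a in sq_le sq_lt; nia.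
have := witness_impossibly_burnable a_ge2 b_gt0; rewrite subnKC; last lia.
move=> burnable; exists (3 * a + 4 * (n - a) - 2), (witness_forest a (n - a)); split => //.
have := witness_head_bound a_ge2 b_gt0; rewrite subnKC; last lia.
move: (head 0 _) => h head_bound [Y_ge0 Y_sq].
have := witness_sqrt_ineq (a := Z.of_nat a) (b := Z.of_nat (n - a)).
rewrite (_ : (Z.of_nat a + Z.of_nat (n - a) = Z.of_nat n)%Z); last lia.
set R := (3 * _ + _ + _ - 6)%Z.
set Y := (12 * Z.of_nat n - 8 - Z.of_nat h)%Z in Y_ge0 Y_sq * => ineq.
have aY : (0 <= Z.of_nat a * Y <= R)%Z by rewrite /Y /R; lia.
have : (Z.of_nat a * Y * (Z.of_nat a * Y) <= R * R)%Z by apply: Z.mul_le_mono_nonneg; lia.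
have : (Z.of_nat a ^ 2 * (120 * Z.of_nat n - 108) <= Z.of_nat a ^ 2 * Y ^ 2)%Z.
  by apply: Z.mul_le_mono_nonneg_l; lia.
have : (Z.of_nat a * Y * (Z.of_nat a * Y) = Z.of_nat a ^ 2 * Y ^ 2)%Z by ring.
have : (R ^ 2 = R * R)%Z by ring.
have /ineq : (Z.of_nat a ^ 2 <= 2 * Z.of_nat n <= Z.of_nat a ^ 2 + 2 * Z.of_nat a)%Z by lia.
lia.
Qed.

Theorem mainTheorem4 (n m : nat) (l : seq nat) :
  3 <= n ->
  impossibly_burnable n m l ->
  ((exists2 i, i < n & Bm m (nth 0%N l i) <= 2) ->
     l1_bound n (head 0%N l))
  /\
  (is_Mn n (head 0%N l) -> forall i, i < n -> 3 <= Bm m (nth 0%N l i)).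
Proof.
move=> n_ge3 burnable; split.
  by move=> small2; apply/l1_bound_of_Z/(impossibly_burnable_l1_boundZ burnable).
case=> _ maximal i lt_i; rewrite leqNgt; apply/negP => lt3.
have bound : l1_boundZ (Z.of_nat n) (Z.of_nat (head 0 l)).
  by apply: (impossibly_burnable_l1_boundZ burnable); exists i.
have [m' [w [w_burnable w_above]]] := exists_impossibly_burnable_above n_ge3.
by apply/w_above/(l1_boundZ_le _ bound); have := maximal _ _ w_burnable; lia.
Qed.
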